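(* Let $D\subset\mathbb{C}$ be an open disk centered at $0$, $f_1,\dots,f_p:D\to\mathbb{C}$ analytic, $A_1,\dots,A_p\in\mathbb{C}^{n\times n}$ with $M(\lambda)=\sum_{m=1}^pf_m(\lambda)A_m$ satisfying $M(\lambda)^T=M(\lambda)$ on $D$, and $M_j:=M^{(j)}(0)$. Let $\mathbf{C}$, $\mathbf{S}$, $\mathbf{A}$, $\mathbf{B}$, $G_{k+1}$, $F_m$ be as described in the context, and assume the infinite matrix $\mathbf{S}$ is invertible. Let $\mathbf{q}_1$ be an infinite block vector whose only nonzero block is its first block $q_1\in\mathbb{C}^n$. Then Algorithm I (indefinite Lanczos) with starting vector $\mathbf{q}_1$ is applicable to the symmetric infinite problem $\mathbf{S}\mathbf{A}\mathbf{x}=\lambda\mathbf{S}\mathbf{B}\mathbf{x}$, and for every iteration $k$: the vector $\mathbf{q}_k$ has only its first $k$ blocks nonzero, the matrix whose columns are these $k$ blocks equals the matrix $Q_k$ generated by Algorithm II (infinite Lanczos) with starting matrix $Q_1=[q_1]$, and the coefficients $t_{i,j}$ and $\omega_i$ produced by the two algorithms coincide.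
   Context: Definitions. $\mathbf{C}=[c_{i,j}]_{i,j\ge1}$ is the infinite matrix determined by $c_{i,1}=1/(i+1)$ ($i\ge1$), $c_{i-1,j}=\frac{j}{i}c_{i,j-1}$ ($i,j>1$). $\mathbf{S}$ is the infinite block matrix with $n\times n$ blocks $S_{1,1}=I$, $S_{1,j}=S_{j,1}=0$ ($j\ge2$), $S_{i,j}=c_{i-1,j-1}M_{i+j-2}$ ($i,j\ge2$). $\mathbf{A}=\operatorname{diag}(-M_0,I,I,\dots)$. $\mathbf{B}$ has first block row $(M_1,\frac12M_2,\frac13M_3,\dots)$, blocks $\frac1jI$ at positions $(j+1,j)$, zeros elsewhere. $G_{k+1}\in\mathbb{R}^{(k+1)\times(k+1)}$ has $g_{j,1}=g_{1,j}=1/j$ and $g_{i,j}=c_{i-1,j}/j$ for $i,j\ge2$; $F_m\in\mathbb{C}^{(k+1)\times(k+1)}$ has $(i,j)$ entry $f_m^{(i+j-1)}(0)$. $\circ$ is the Hadamard product, $^T$ the non-conjugate transpose. Algorithm I (indefinite Lanczos for a symmetric pencil $\hat A x=\lambda\hat Bx$, here $\hat A=\mathbf{S}\mathbf{A}$, $\hat B=\mathbf{S}\mathbf{B}$): set $q_0=0$, $t_{0,1}=0$, $\omega_1=q_1^T\hat Bq_1$. For $k=1,2,\dots$: $w=\hat A^{-1}\hat Bq_k$; $z=\hat Bw$; $\alpha=z^Tq_k$, $\beta=z^Tq_{k-1}$, $\gamma=z^Tw$; $t_{k,k}=\alpha/\omega_k$, $t_{k-1,k}=\beta/\omega_{k-1}$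 (taken as $0$ when $k=1$); $w_\perp=w-t_{k,k}q_k-t_{k-1,k}q_{k-1}$; $t_{k+1,k}=\|w_\perp\|_2$; $q_{k+1}=w_\perp/t_{k+1,k}$; $\omega_{k+1}=(\gamma-2t_{k,k}\alpha-2t_{k-1,k}\beta+t_{k,k}^2\omega_k+t_{k-1,k}^2\omega_{k-1})/t_{k+1,k}^2$. Algorithm II (infinite Lanczos), with $Q_1\in\mathbb{C}^{n\times1}$: set $Q_0=0$, $t_{0,1}=0$, $\omega_1=Q_1^TM_1Q_1$. For $k=1,2,\dots$, with $Q_k=[\tilde q_1,\dots,\tilde q_k]\in\mathbb{C}^{n\times k}$: compute $w_1=-M_0^{-1}\sum_{j=1}^k\frac{M_j}{j}\tilde q_j$ and $W=w_1e_1^T+Q_kD\in\mathbb{C}^{n\times(k+1)}$, where $D\in\mathbb{R}^{k\times(k+1)}$ has $d_{j,j+1}=1/j$ and zeros elsewhere; compute $Z=\sum_{m=1}^pA_mW(G_{k+1}\circ F_m)$; pad $Q_k$ and $Q_{k-1}$ with zero columns to size $n\times(k+1)$ and compute $\alpha=\operatorname{vec}(Z)^T\operatorname{vec}(Q_k)$, $\beta=\operatorname{vec}(Z)^T\operatorname{vec}(Q_{k-1})$, $\gamma=\operatorname{vec}(Z)^T\operatorname{vec}(W)$; $t_{k,k}=\alpha/\omega_k$, $t_{k-1,k}=\beta/\omega_{k-1}$ ($0$ when $k=1$); $W_\perp=W-t_{k,k}Q_k-t_{k-1,k}Q_{k-1}$; $t_{k+1,k}=\|W_\perp\|_F$; $Q_{k+1}=W_\perp/t_{k+1,k}$;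 $\omega_{k+1}=(\gamma-2t_{k,k}\alpha-2t_{k-1,k}\beta+t_{k,k}^2\omega_k+t_{k-1,k}^2\omega_{k-1})/t_{k+1,k}^2$. *)

From HB Require Import structures.
From mathcomp Require Import all_boot all_order all_algebra.
From mathcomp Require Import complex.
From mathcomp Require Import boolp classical_sets reals topology normedtype derive.
Set Implicit Arguments.
Unset Strict Implicit.
Unset Printing Implicit Defensive.
Import Order.TTheory GRing.Theory Num.Theory.
Import numFieldNormedType.Exports.
Local Open Scope ring_scope.

(* R[i] seen as a numFieldType, hence a normed field over itself: derivatives
   below are complex derivatives (increments h range over R[i]). *)
Definition CC (R : realType) : numFieldType := R[i].

Definition cdern (R : realType) (j : nat) (f : R[i] -> R[i]) : R[i] -> R[i] :=
  @derive1n (CC R) (CC R) j f.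

Definition cdern_mx (R : realType) (n : nat) (j : nat)
  (F : R[i] -> 'M[R[i]]_n) : R[i] -> 'M[R[i]]_n :=
  @derive1n (CC R) _ j (F : CC R -> 'M[CC R]_n).

Definition cderivable (R : realType) (f : R[i] -> R[i]) (z : R[i]) : Prop :=
  @derivable (CC R) (CC R) (CC R) f z 1.

Definition disk (R : realType) (r : R) : set R[i] :=
  [set z : R[i] | `|z| < (r%:C)%C].

(* f analytic (= holomorphic, i.e. complex differentiable to every order)
   on the open set D *)
Definition analytic_on (R : realType) (D : set R[i]) (f : R[i] -> R[i]) : Prop :=
  forall (j : nat) (z : R[i]), D z -> cderivable (cdern j f) z.

Definition Mfun (R : realType) (n p : nat) (f : 'I_p -> R[i] -> R[i])
  (A : 'I_p -> 'M[R[i]]_n) (z : R[i]) : 'M[R[i]]_n :=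
  \sum_(m < p) f m z *: A m.

(* Infinite block vectors / matrices (blocks indexed from 0: block b is the  *)
(* paper's block b+1).                                                       *)
Section Infinite.
Variables (C : numClosedFieldType) (n : nat).

Definition ivec := nat -> 'cV[C]_n.
Definition imat := nat -> nat -> 'M[C]_n.

Definition izero : ivec := fun _ => 0.

Definition fsupp (x : ivec) : Prop := exists N, forall j, (N <= j)%N -> x j = 0.

Definition supb (x : ivec) : nat :=
  match pselect (fsupp x) with
  | left H => proj1_sig (cid H)
  | right _ => 0%N
  end.

Definition imul (K : imat) (x : ivec) : ivec :=
  fun i => \sum_(j < supb x) K i j *m x j.

Definition idotT (z x : ivec) : C :=
  \sum_(j < supb x) ((z j)^T *m x j) 0 0.

Definition inorm2 (x : ivec) : C :=
  sqrtC (\sum_(j < supb x) \sum_(r < n) `|x j r 0| ^+ 2).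

(* K is injective on finitely supported block vectors
   (our rendering of "the infinite matrix K is invertible") *)
Definition inj_fsupp (K : imat) : Prop :=
  forall x, fsupp x -> imul K x = izero -> x = izero.

(* Algorithm I: indefinite Lanczos for a pencil (Ah, Bh) acting on      *)
(* finitely supported block vectors. w = Ah^{-1} Bh q_k is expressed as *)
(* "w finitely supported and Ah w = Bh q_k".                            *)
Definition lanczosI (Ah Bh : ivec -> ivec) (q1 : ivec)
  (q w : nat -> ivec) (t : nat -> nat -> C) (om : nat -> C) : Prop :=
  [/\ q 0%N = izero, q 1%N = q1, om 1%N = idotT (Bh q1) q1 &
   forall k, (1 <= k)%N ->
     let z := Bh (w k) in
     let al := idotT z (q k) in
     let be := idotT z (q k.-1) in
     let ga := idotT z (w k) in
     let wp : ivec := fun j => w k j - t k k *: q k j - t k.-1 k *: q k.-1 j in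
     [/\ fsupp (w k), Ah (w k) = Bh (q k),
         t k k = al / om k,
         t k.-1 k = (if k == 1%N then 0 else be / om k.-1) &
       [/\ t k.+1 k = inorm2 wp,
         q k.+1 = (fun j => (t k.+1 k)^-1 *: wp j) &
         om k.+1 = (ga - 2 * t k k * al - 2 * t k.-1 k * be
                    + t k k ^+ 2 * om k + t k.-1 k ^+ 2 * om k.-1) / t k.+1 k ^+ 2]]].

End Infinite.

Section Matrices.
Variables (C : numClosedFieldType) (n p : nat).

(* ccoef j i = c_{i,j} (1-based indices i, j >= 1):
   c_{i,1} = 1/(i+1),  c_{i,j} = (j/(i+1)) c_{i+1,j-1}  (j >= 2),
   i.e. c_{i-1,j} = (j/i) c_{i,j-1}. *)
Fixpoint ccoef (j : nat) (i : nat) {struct j} : C :=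
  match j with
  | 0%N => 0
  | j1.+1 =>
      match j1 with
      | 0%N => (i.+1%:R)^-1
      | _ => (j%:R / i.+1%:R) * ccoef j1 i.+1
      end
  end.

Definition cC (i j : nat) : C := ccoef j i.

(* M_ : nat -> 'M_n is the sequence M_j = M^{(j)}(0). Block indices 0-based. *)
Definition Smat (M_ : nat -> 'M[C]_n) : imat C n :=
  fun i j => if (i == 0%N) || (j == 0%N) then
               (if (i == 0%N) && (j == 0%N) then 1%:M else 0)
             else cC i j *: M_ (i + j)%N.

Definition Amat (M_ : nat -> 'M[C]_n) : imat C n :=
  fun i j => if i == j then (if i == 0%N then - M_ 0%N else 1%:M) else 0.

Definition Bmat (M_ : nat -> 'M[C]_n) : imat C n :=
  fun i j => if i == 0%N then (j.+1%:R)^-1 *: M_ j.+1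
             else if i == j.+1 then (j.+1%:R)^-1 *: 1%:M else 0.

(* G_m (0-based entries (a,b) = paper (a+1,b+1)) *)
Definition Gmat (m : nat) : 'M[C]_m :=
  \matrix_(a < m, b < m)
    (if (a : nat) == 0%N then (b.+1%:R)^-1
     else if (b : nat) == 0%N then (a.+1%:R)^-1
     else cC a b.+1 / b.+1%:R).

(* F_m with fd j = f_m^{(j)}(0): paper entry (i,j) = f^{(i+j-1)}(0) *)
Definition Fmat (m : nat) (fd : nat -> C) : 'M[C]_m :=
  \matrix_(a < m, b < m) fd (a + b).+1.

Definition hadamard (r c : nat) (X Y : 'M[C]_(r, c)) : 'M[C]_(r, c) :=
  \matrix_(i, j) (X i j * Y i j).

Definition vdot (r c : nat) (X Y : 'M[C]_(r, c)) : C :=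
  (mxvec X *m (mxvec Y)^T) 0 0.

Definition frob (r c : nat) (X : 'M[C]_(r, c)) : C :=
  sqrtC (\sum_(i < r) \sum_(j < c) `|X i j| ^+ 2).

Definition matof (m : nat) (f : nat -> 'cV[C]_n) : 'M[C]_(n, m) :=
  \matrix_(r < n, c < m) f c r 0.

Definition colsfun (m : nat) (X : 'M[C]_(n, m)) : nat -> 'cV[C]_n :=
  fun c => if insub c is Some i then col i X else 0.

Definition Dmat (k : nat) : 'M[C]_(k, k.+1) :=
  \matrix_(j < k, l < k.+1) (if (l : nat) == j.+1 then (j.+1%:R)^-1 else 0).

Definition e1T (k : nat) : 'M[C]_(1, k.+1) :=
  \row_(l < k.+1) (if (l : nat) == 0%N then 1 else 0).

(* State before iteration k: columns of Q_{k-1}, Q_k, omega_{k-1},       *)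
(* omega_k (columns beyond the width are zero = zero padding).          *)
Record stII := StII { sQp : nat -> 'cV[C]_n; sQ : nat -> 'cV[C]_n;
                      somp : C; som : C }.

Variables (M_ : nat -> 'M[C]_n) (fd : 'I_p -> nat -> C) (A : 'I_p -> 'M[C]_n)
          (q1 : 'cV[C]_n).

(* iteration k: returns ((t_{k,k}, t_{k-1,k}, t_{k+1,k}), next state) *)
Definition stepII (k : nat) (s : stII) : (C * C * C) * stII :=
  let Qk := matof k (sQ s) in
  let Qkpad := matof k.+1 (sQ s) in
  let Qk1pad := matof k.+1 (sQp s) in
  let w1 : 'cV[C]_n :=
    - (invmx (M_ 0%N) *m \sum_(j < k) (j.+1%:R)^-1 *: (M_ j.+1 *m sQ s j)) in
  let W : 'M[C]_(n, k.+1) := w1 *m e1T k + Qk *m Dmat k in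
  let Z : 'M[C]_(n, k.+1) :=
    \sum_(m < p) A m *m W *m hadamard (Gmat k.+1) (Fmat k.+1 (fd m)) in
  let al := vdot Z Qkpad in
  let be := vdot Z Qk1pad in
  let ga := vdot Z W in
  let tkk := al / som s in
  let tk1k := if k == 1%N then 0 else be / somp s in
  let Wp := W - tkk *: Qkpad - tk1k *: Qk1pad in
  let tn := frob Wp in
  let Qn := tn^-1 *: Wp in
  let omn := (ga - 2 * tkk * al - 2 * tk1k * be
              + tkk ^+ 2 * som s + tk1k ^+ 2 * somp s) / tn ^+ 2 in
  ((tkk, tk1k, tn), StII (sQ s) (colsfun Qn) (som s) omn).

Definition initII : stII :=
  StII (fun _ => 0) (fun c => if c == 0%N then q1 else 0) 0
       ((q1^T *m M_ 1%N *m q1) 0 0).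

(* stateII k = state before iteration k.+1 *)
Fixpoint stateII (k : nat) : stII :=
  match k with
  | 0%N => initII
  | k'.+1 => (stepII k (stateII k')).2
  end.

Definition QII (k : nat) : 'M[C]_(n, k) := matof k (sQ (stateII k.-1)).
Definition omII (k : nat) : C := som (stateII k.-1).
Definition outII (k : nat) : C * C * C := (stepII k (stateII k.-1)).1.

Definition tII (i j : nat) : C :=
  let '(tjj, tj1j, tnj) := outII j in
  if i == j then tjj else if i.+1 == j then tj1j
  else if i == j.+1 then tnj else 0.

End Matrices.

(* Since [S] is injective and [M_0] invertible, the step [w = (S A)^-1 S B q_k] of
   Algorithm I amounts to [A w = B q_k], whose unique solution has first block
   [-M_0^-1 \sum_j M_j q_j / j] followed by the blocks [q_(j-1) / j]: it is the
   matrix [W = w_1 e_1^T + Q_k D] of Algorithm II, and [q_k] stays supported on its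
   first [k] blocks.  Expanding [M_j = \sum_m f_m^(j)(0) A_m] and using that
   [c_{i,j+1}/(j+1) = i! j!/(i+j+1)!] is symmetric in [i] and [j], the blocks of
   [z = S B w] are the columns of [Z = \sum_m A_m W (G_(k+1) o F_m)].  Hence every
   scalar product and norm of Algorithm I is the one computed by Algorithm II, so
   Algorithm II yields a run of Algorithm I, and Algorithm I, being deterministic,
   has no other run. *)

From HB Require Import structures.
From mathcomp Require Import all_boot all_order all_algebra.
From mathcomp Require Import complex.
From mathcomp Require Import boolp classical_sets functions reals topology normedtype derive.
From mathcomp Require Import ring.
Set Implicit Arguments.
Unset Strict Implicit.
Unset Printing Implicit Defensive.
Import Order.TTheory GRing.Theory Num.Theory.
Local Open Scope ring_scope.

Section FiniteSupport.
Variables (C : numClosedFieldType) (n : nat).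
Implicit Types (x y : ivec C n) (K : imat C n).

Definition vanish_from x (N : nat) := forall j, (N <= j)%N -> x j = 0.

Lemma vanish_from_fsupp x N : vanish_from x N -> fsupp x.
Proof. by exists N. Qed.

Lemma vanish_from_supb x : fsupp x -> vanish_from x (supb x).
Proof. by rewrite /supb; case: pselect => // H _; case: (cid H). Qed.

Lemma vanish_fromW x N M : vanish_from x N -> (N <= M)%N -> vanish_from x M.
Proof. by move=> xN NM j Mj; apply: xN; apply: leq_trans Mj. Qed.

Lemma big_supb (V : nmodType) x N (F : nat -> 'cV[C]_n -> V) :
  vanish_from x N -> (forall j, F j 0 = 0) ->
  \sum_(j < supb x) F j (x j) = \sum_(j < N) F j (x j).
Proof.
move=> xN F0.
have widen M N' : vanish_from x N' -> (N' <= M)%N ->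
    \sum_(j < M) F j (x j) = \sum_(j < N') F j (x j).
  move=> xN' le; rewrite (big_ord_widen M (fun j => F j (x j)) le) [RHS]big_mkcond.
  apply: eq_bigr => j _; case: ifP => // /negbT; rewrite -leqNgt => /xN' ->.
  by rewrite F0.
have xs := vanish_from_supb (vanish_from_fsupp xN).
by rewrite -(widen _ _ xs (leq_addr N _)) (widen _ _ xN (leq_addl _ _)).
Qed.

Lemma imulE K x N : vanish_from x N ->
  imul K x = fun i => \sum_(j < N) K i j *m x j.
Proof.
move=> xN; apply: funext => i.
by rewrite /imul (big_supb (F := fun j v => K i j *m v) xN) // => j; rewrite mulmx0.
Qed.

Lemma idotTE z x N : vanish_from x N ->
  idotT z x = \sum_(j < N) ((z j)^T *m x j) 0 0.
Proof.
move=> xN; rewrite /idotT (big_supb (F := fun j v => ((z j)^T *m v) 0 0) xN) //.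
by move=> j; rewrite mulmx0 mxE.
Qed.

Lemma inorm2E x N : vanish_from x N ->
  inorm2 x = sqrtC (\sum_(j < N) \sum_(r < n) `|x j r 0| ^+ 2).
Proof.
move=> xN; rewrite /inorm2 (big_supb (F := fun j v => \sum_(r < n) `|v r 0| ^+ 2) xN) //.
by move=> j; rewrite big1 // => r _; rewrite mxE normr0 expr0n.
Qed.

Lemma vanish_fromB x y N : vanish_from x N -> vanish_from y N ->
  vanish_from (fun j => x j - y j) N.
Proof. by move=> xN yN j hj; rewrite xN ?yN ?subr0. Qed.

Lemma fsuppB x y : fsupp x -> fsupp y -> fsupp (fun j => x j - y j).
Proof.
move=> /vanish_from_supb xs /vanish_from_supb ys.
have xN := vanish_fromW xs (leq_addr (supb y) _).
have yN := vanish_fromW ys (leq_addl (supb x) _).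
exact: vanish_from_fsupp (vanish_fromB xN yN).
Qed.

Lemma imul_sub K x y : fsupp x -> fsupp y ->
  imul K (fun j => x j - y j) = fun i => imul K x i - imul K y i.
Proof.
move=> /vanish_from_supb xs /vanish_from_supb ys.
have xN := vanish_fromW xs (leq_addr (supb y) _).
have yN := vanish_fromW ys (leq_addl (supb x) _).
rewrite (imulE K (vanish_fromB xN yN)) (imulE K xN) (imulE K yN).
by apply: funext => i; rewrite -sumrB; apply: eq_bigr => j _; rewrite mulmxBr.
Qed.

Lemma imul_row1 K x i j0 : fsupp x -> (forall j, j != j0 -> K i j = 0) ->
  imul K x i = K i j0 *m x j0.
Proof.
move=> /vanish_from_supb xs Ki.
have xN := vanish_fromW xs (leq_addl j0.+1 (supb x)).
rewrite (imulE K xN) (bigD1 (Ordinal (leq_trans (ltnSn j0) (leq_addr _ _)))) //=.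
by rewrite big1 ?addr0 // => j jj0; rewrite Ki ?mul0mx.
Qed.

End FiniteSupport.

Section IndefiniteLanczos.
Variables (C : numClosedFieldType) (n : nat) (Ah Bh : ivec C n -> ivec C n).
Variable q1 : ivec C n.
Hypothesis Ah_inj : forall w w', fsupp w -> fsupp w' -> Ah w = Ah w' -> w = w'.

Lemma lanczosI_unique q w t om q' w' t' om' :
  lanczosI Ah Bh q1 q w t om -> lanczosI Ah Bh q1 q' w' t' om' ->
  forall k, (1 <= k)%N ->
  [/\ q k = q' k, om k = om' k, t k k = t' k k, t k.-1 k = t' k.-1 k
    & t k.+1 k = t' k.+1 k].
Proof.
case=> q0 q1E om1 H [q0' q1E' om1' H'].
pose agree k := [/\ q k = q' k, q k.+1 = q' k.+1, om k.+1 = om' k.+1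
                  & k != 0%N -> om k = om' k].
have step k : agree k -> [/\ t k.+1 k.+1 = t' k.+1 k.+1, t k k.+1 = t' k k.+1,
                            t k.+2 k.+1 = t' k.+2 k.+1 & agree k.+1].
  case=> qk qk1 omk1 omk.
  move: (H k.+1 isT) (H' k.+1 isT) => /=.
  case=> fw Aw tkk tk1k [tn qn omn] [fw' Aw' tkk' tk1k' [tn' qn' omn']].
  have ew : w k.+1 = w' k.+1 by apply: Ah_inj; rewrite // Aw Aw' qk1.
  have et1 : t k.+1 k.+1 = t' k.+1 k.+1 by rewrite tkk tkk' ew qk1 omk1.
  have et0 : t k k.+1 = t' k k.+1.
    by rewrite tk1k tk1k'; case: eqP => // /eqP k0; rewrite ew qk omk.
  (* [om 0] is junk; it only enters multiplied by [t 0 1 = 0]. *)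
  have eom : t k k.+1 ^+ 2 * om k = t' k k.+1 ^+ 2 * om' k.
    case: (eqVneq k 0%N) => [k0|/omk ->]; last by rewrite et0.
    by rewrite -et0 tk1k k0 expr0n !mul0r.
  have etn : t k.+2 k.+1 = t' k.+2 k.+1 by rewrite tn tn' ew et1 et0 qk qk1.
  split=> //; split=> //.
  - by rewrite qn qn' etn ew et1 et0 qk qk1.
  - by rewrite omn omn' eom etn ew et1 et0 qk qk1 omk1.
have agree_all k : agree k.
  elim: k => [|k IH]; first by split; rewrite ?q0 ?q0' ?q1E ?q1E' ?om1 ?om1'.
  by case: (step k IH).
case=> // k _; have [_ qk1 omk1 _] := agree_all k.
by have [et1 et0 etn _] := step k (agree_all k).
Qed.

End IndefiniteLanczos.

Section Columns.
Variables (C : numClosedFieldType) (n : nat).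
Implicit Types x y z : nat -> 'cV[C]_n.

Lemma vdotE r c (X Y : 'M[C]_(r, c)) :
  vdot X Y = \sum_(i < r) \sum_(j < c) X i j * Y i j.
Proof.
rewrite /vdot mxE (reindex _ (curry_mxvec_bij _ _)) /= pair_bigA /=.
by apply: eq_bigr => -[i j] _ /=; rewrite !mxE !mxvecE.
Qed.

Lemma vdot_matof N x y :
  vdot (matof N x) (matof N y) = \sum_(j < N) ((x j)^T *m y j) 0 0.
Proof.
rewrite vdotE exchange_big; apply: eq_bigr => j _; rewrite mxE.
by apply: eq_bigr => i _; rewrite !mxE.
Qed.

Lemma frob_matof N x :
  frob (matof N x) = sqrtC (\sum_(j < N) \sum_(r < n) `|x j r 0| ^+ 2).
Proof.
rewrite /frob exchange_big; congr sqrtC; apply: eq_bigr => j _.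
by apply: eq_bigr => i _; rewrite !mxE.
Qed.

Lemma matof_combination N x y z a b :
  matof N x - a *: matof N y - b *: matof N z =
  matof N (fun j => x j - a *: y j - b *: z j).
Proof. by apply/matrixP => i j; rewrite !mxE. Qed.

Lemma colsfun_scale_matof N x a : vanish_from x N ->
  colsfun (a *: matof N x) = fun j => a *: x j.
Proof.
move=> xN; apply: funext => j; rewrite /colsfun.
case: insubP => [i _ <-|]; first by apply/matrixP => r s; rewrite !mxE (ord1 s).
by rewrite -leqNgt => /xN ->; rewrite scaler0.
Qed.

End Columns.

Section Coefficients.
Variable C : numClosedFieldType.

Lemma natr_fact_neq0 k : (k`!%:R : C) != 0.
Proof. by rewrite pnatr_eq0 -lt0n fact_gt0. Qed.

Lemma ccoef_divE j i :
  ccoef C j.+1 i / j.+1%:R = i`!%:R * j`!%:R / (i + j).+1`!%:R.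
Proof.
elim: j i => [|j IH] i.
  rewrite /= addn0 factS natrM divr1 fact0 mulr1.
  by field; rewrite natr_fact_neq0 nat1r pnatr_eq0.
have -> : ccoef C j.+2 i = j.+2%:R / i.+1%:R * ccoef C j.+1 i.+1 by [].
have -> : ccoef C j.+1 i.+1 = i.+1`!%:R * j`!%:R / (i.+1 + j).+1`!%:R * j.+1%:R.
  by rewrite -IH divfK ?pnatr_eq0.
rewrite addSn -addnS !factS !natrM.
by field; rewrite natr_fact_neq0 !nat1r -!natrD !nat1r !pnatr_eq0.
Qed.

Lemma ccoef_div_sym a b :
  ccoef C b.+1 a / b.+1%:R = ccoef C a.+1 b / a.+1%:R.
Proof. by rewrite !ccoef_divE addnC; congr (_ / _); rewrite mulrC. Qed.

End Coefficients.

Section Pencil.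
Variables (C : numClosedFieldType) (n : nat) (M_ : nat -> 'M[C]_n).
Implicit Types (x w : ivec C n) (Q : nat -> 'cV[C]_n).

Lemma imul_Amat x i : fsupp x -> imul (Amat M_) x i = Amat M_ i i *m x i.
Proof. by move=> fx; apply: imul_row1 => // j ji; rewrite /Amat eq_sym (negbTE ji). Qed.

Lemma imul_Bmat0 x N : vanish_from x N ->
  imul (Bmat M_) x 0%N = \sum_(j < N) (j.+1%:R)^-1 *: (M_ j.+1 *m x j).
Proof. by move=> xN; rewrite (imulE _ xN); apply: eq_bigr => j _; rewrite /Bmat /= scalemxAl. Qed.

Lemma imul_BmatS x i : fsupp x -> imul (Bmat M_) x i.+1 = (i.+1%:R)^-1 *: x i.
Proof.
move=> fx; rewrite (@imul_row1 _ _ _ _ _ i fx); first by rewrite /Bmat /= eqxx -scalemxAl mul1mx.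
by move=> j ji; rewrite /Bmat /= eqSS eq_sym (negbTE ji).
Qed.

Lemma imul_Smat0 x : fsupp x -> imul (Smat M_) x 0%N = x 0%N.
Proof.
move=> fx; rewrite (@imul_row1 _ _ _ _ _ 0 fx); first by rewrite mul1mx.
by move=> j j0; rewrite /Smat /= (negbTE j0).
Qed.

Lemma imul_SmatS x N c : vanish_from x N.+1 ->
  imul (Smat M_) x c.+1 =
  \sum_(j < N) (cC C c.+1 j.+1 *: M_ (c.+1 + j.+1)%N) *m x j.+1.
Proof. by move=> xN; rewrite (imulE _ xN) big_ord_recl /= {1}/Smat /= mul0mx add0r. Qed.

Lemma Amat_vanish x N : vanish_from x N -> vanish_from (imul (Amat M_) x) N.
Proof. by move=> xN j hj; rewrite imul_Amat ?xN ?mulmx0 //; exists N. Qed.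

Lemma Bmat_vanish x N : vanish_from x N -> vanish_from (imul (Bmat M_) x) N.+1.
Proof. by move=> xN [|j] // hj; rewrite imul_BmatS ?xN ?scaler0 //; exists N. Qed.

(* [AinvB k Q] solves [Amat w = Bmat Q]; as a matrix it is the paper's
   [W = w_1 e_1^T + Q_k D]. *)
Definition AinvB_head k Q : 'cV[C]_n :=
  - (invmx (M_ 0%N) *m \sum_(j < k) (j.+1%:R)^-1 *: (M_ j.+1 *m Q j)).

Definition AinvB k Q : ivec C n :=
  fun j => if j is l.+1 then (l.+1%:R)^-1 *: Q l else AinvB_head k Q.

Lemma AinvB_vanish k Q : vanish_from Q k -> vanish_from (AinvB k Q) k.+1.
Proof. by move=> Qk [|j] // hj; rewrite /AinvB Qk ?scaler0. Qed.

Hypothesis M0_unit : M_ 0%N \in unitmx.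

Lemma Amat_AinvB k Q : vanish_from Q k ->
  imul (Amat M_) (AinvB k Q) = imul (Bmat M_) Q.
Proof.
move=> Qk; have fw := vanish_from_fsupp (AinvB_vanish Qk).
apply: funext => -[|i]; rewrite imul_Amat // /Amat /=.
  by rewrite (imul_Bmat0 Qk) mulNmx mulmxN opprK mulmxA mulmxV // mul1mx.
by rewrite eqxx mul1mx imul_BmatS //; exists k.
Qed.

Hypothesis S_inj : inj_fsupp (Smat M_).

Lemma SA_inj w w' : fsupp w -> fsupp w' ->
  imul (Smat M_) (imul (Amat M_) w) = imul (Smat M_) (imul (Amat M_) w') ->
  w = w'.
Proof.
move=> fw fw' eSA.
have fA x : fsupp x -> fsupp (imul (Amat M_) x).
  by move=> /vanish_from_supb /Amat_vanish /vanish_from_fsupp.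
have eA : imul (Amat M_) w = imul (Amat M_) w'.
  have /(S_inj (fsuppB (fA _ fw) (fA _ fw'))) eB :
      imul (Smat M_) (fun j => imul (Amat M_) w j - imul (Amat M_) w' j) = izero C n.
    apply: funext => i; rewrite (imul_sub _ (fA _ fw) (fA _ fw')) /=.
    by move: eSA => /(congr1 (fun v => v i)) ->; rewrite subrr.
  apply: funext => i.
  by apply/eqP; rewrite -subr_eq0; apply/eqP/(congr1 (fun v => v i) eB).
apply: funext => i; move: (congr1 (fun v => v i) eA); rewrite !imul_Amat // /Amat eqxx.
by case: ifP => _; [rewrite !mulNmx => /oppr_inj /(can_inj (mulKmx M0_unit)) | rewrite !mul1mx].
Qed.

End Pencil.

Section InfiniteLanczos.
Variables (C : numClosedFieldType) (n p : nat) (M_ : nat -> 'M[C]_n).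
Variables (fd : 'I_p -> nat -> C) (A : 'I_p -> 'M[C]_n).
Implicit Types (x : ivec C n) (Q : nat -> 'cV[C]_n).
Arguments ccoef : simpl never.

Lemma AinvB_matof k Q :
  AinvB_head M_ k Q *m e1T C k + matof k Q *m Dmat C k = matof k.+1 (AinvB M_ k Q).
Proof.
rewrite /AinvB; move: (AinvB_head M_ k Q) => h.
apply/matrixP => r [[|c] hc]; rewrite !mxE big_ord1 !mxE /=.
  by rewrite mulr1 big1 ?addr0 // => j _; rewrite !mxE mulr0.
rewrite mulr0 add0r (bigD1 (Ordinal (hc : c < k)%N)) //= big1 ?addr0.
  by rewrite !mxE eqxx mulrC.
by move=> j jc; rewrite !mxE eqSS eq_sym ifN ?mulr0.
Qed.

Lemma mulmx_matof_entry (B : 'M[C]_n) N (X : nat -> 'cV[C]_n) r (l : 'I_N) :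
  (B *m matof N X) r l = (B *m X l) r 0.
Proof. by rewrite !mxE; apply: eq_bigr => i _; rewrite !mxE. Qed.

Lemma Gmat_col0 N (l c : 'I_N) : (c : nat) = 0%N -> Gmat C N l c = (l.+1%:R)^-1.
Proof. by move=> c0; rewrite mxE c0 /=; case: eqP => // ->. Qed.

(* [Gmat] is given by rows; the symmetry of [c_{i,j+1}/(j+1)] turns its columns into
   the coefficients of [Smat]. *)
Lemma Gmat_colS N (l c : 'I_N) c' : (c : nat) = c'.+1 ->
  Gmat C N l c = cC C c'.+1 l.+1 / l.+1%:R.
Proof.
move=> cS; rewrite mxE cS /=; case: (l : nat) => [|l'] /=; first by rewrite /cC divr1.
by rewrite /cC -ccoef_div_sym.
Qed.

Hypothesis M_sum : forall j, M_ j = \sum_(m < p) fd m j *: A m.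

Lemma mulmx_M_entry j (v : 'cV[C]_n) r :
  (M_ j *m v) r 0 = \sum_(m < p) fd m j * (A m *m v) r 0.
Proof.
by rewrite M_sum mulmx_suml summxE; apply: eq_bigr => m _; rewrite -scalemxAl mxE.
Qed.

Lemma hadamard_sum_matof k x : vanish_from x k.+1 ->
  \sum_(m < p) A m *m matof k.+1 x *m hadamard (Gmat C k.+1) (Fmat k.+1 (fd m))
  = matof k.+1 (imul (Smat M_) (imul (Bmat M_) x)).
Proof.
move=> xk; have fx := vanish_from_fsupp xk; have Bxk := Bmat_vanish M_ xk.
apply/matrixP => r c; rewrite summxE [RHS]mxE.
under eq_bigr => m _ do rewrite mxE.
under eq_bigr => m _ do under eq_bigr => l _ do
  rewrite mulmx_matof_entry [hadamard _ _ _ _]mxE [Fmat _ _ _ _]mxE.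
rewrite exchange_big /=.
case: c => -[|c] hc.
  rewrite (imul_Smat0 _ (vanish_from_fsupp Bxk)) (imul_Bmat0 _ xk) summxE.
  apply: eq_bigr => l _; rewrite [RHS]mxE mulmx_M_entry mulr_sumr.
  by apply: eq_bigr => m _; rewrite (Gmat_col0 _ (c := Ordinal hc)) // addn0; ring.
rewrite (imul_SmatS _ _ Bxk) summxE; apply: eq_bigr => l _.
rewrite imul_BmatS // -scalemxAl -scalemxAr [in RHS]mxE [in RHS]mxE mulmx_M_entry !mulr_sumr.
apply: eq_bigr => m _; rewrite (Gmat_colS _ (c := Ordinal hc) (c' := c)) //.
by rewrite addnS addnC; ring.
Qed.

Lemma stepII_vector k s : vanish_from (sQ s) k -> vanish_from (sQp s) k ->
  stepII M_ fd A k s =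
  let w := AinvB M_ k (sQ s) in
  let z := imul (Smat M_) (imul (Bmat M_) w) in
  let al := idotT z (sQ s) in let be := idotT z (sQp s) in
  let ga := idotT z w in
  let tkk := al / som s in
  let tk1k := if k == 1%N then 0 else be / somp s in
  let wp : ivec C n := fun j => w j - tkk *: sQ s j - tk1k *: sQp s j in
  let tn := inorm2 wp in
  ((tkk, tk1k, tn), StII (sQ s) (fun j => tn^-1 *: wp j) (som s)
     ((ga - 2 * tkk * al - 2 * tk1k * be + tkk ^+ 2 * som s + tk1k ^+ 2 * somp s)
      / tn ^+ 2)).
Proof.
move=> Qk Qpk; have wk := AinvB_vanish M_ Qk.
have Qk1 := vanish_fromW Qk (leqnSn k); have Qpk1 := vanish_fromW Qpk (leqnSn k).
rewrite /stepII -/(AinvB_head M_ k (sQ s)) AinvB_matof (hadamard_sum_matof wk) !vdot_matof.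
set z := imul (Smat M_) _.
rewrite -(idotTE z Qk1) -(idotTE z Qpk1) -(idotTE z wk) matof_combination frob_matof.
set wp := (fun j => _ - _ *: sQ s j - _ *: sQp s j).
have wpk : vanish_from wp k.+1 by move=> j hj; rewrite /wp wk // Qk1 // Qpk1 // !scaler0 !subr0.
by rewrite -(inorm2E wpk) colsfun_scale_matof.
Qed.

End InfiniteLanczos.

Section InfiniteLanczosRun.
Variables (C : numClosedFieldType) (n p : nat) (M_ : nat -> 'M[C]_n).
Variables (fd : 'I_p -> nat -> C) (A : 'I_p -> 'M[C]_n) (q1 : 'cV[C]_n).
Hypothesis M_sum : forall j, M_ j = \sum_(m < p) fd m j *: A m.

Local Notation st := (stateII M_ fd A q1).
Local Notation step k := (stepII M_ fd A k).

Lemma stateII_vanish k : vanish_from (sQ (st k)) k.+1 /\ vanish_from (sQp (st k)) k.+1.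
Proof.
elim: k => [|k [Qk Qpk]]; first by split=> -[|j].
have -> : st k.+1 = (step k.+1 (st k)).2 by [].
rewrite (stepII_vector M_sum Qk Qpk) /=; split; last exact: vanish_fromW Qk _.
have wk := AinvB_vanish M_ Qk.
have Qk1 := vanish_fromW Qk (leqnSn _); have Qpk1 := vanish_fromW Qpk (leqnSn _).
by move=> j hj; rewrite wk // Qk1 // Qpk1 // !scaler0 !subr0 scaler0.
Qed.

Definition qII (k : nat) : ivec C n := if k is k'.+1 then sQ (st k') else izero C n.

Lemma stateII_step k :
  let w := AinvB M_ k.+1 (qII k.+1) in
  let z := imul (Smat M_) (imul (Bmat M_) w) in
  let al := idotT z (qII k.+1) in let be := idotT z (qII k) in
  let ga := idotT z w in
  let tkk := al / omII M_ fd A q1 k.+1 in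
  let tk1k := if k.+1 == 1%N then 0 else be / omII M_ fd A q1 k in
  let wp : ivec C n := fun j => w j - tkk *: qII k.+1 j - tk1k *: qII k j in
  let tn := inorm2 wp in
  [/\ outII M_ fd A q1 k.+1 = (tkk, tk1k, tn),
      qII k.+2 = (fun j => tn^-1 *: wp j) &
      omII M_ fd A q1 k.+2 =
      (ga - 2 * tkk * al - 2 * tk1k * be + tkk ^+ 2 * omII M_ fd A q1 k.+1
       + tk1k ^+ 2 * omII M_ fd A q1 k) / tn ^+ 2].
Proof.
have [Qk Qpk] := stateII_vanish k.
have stS j : st j.+1 = (step j.+1 (st j)).2 by [].
have Qp_qII : sQp (st k) = qII k by case: k {Qk Qpk}.
have omp_omII : k != 0%N -> somp (st k) = omII M_ fd A q1 k by case: k {Qk Qpk Qp_qII}.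
have -> : outII M_ fd A q1 k.+1 = (step k.+1 (st k)).1 by [].
have -> : qII k.+2 = sQ (st k.+1) by [].
have -> : omII M_ fd A q1 k.+2 = som (st k.+1) by [].
have -> : qII k.+1 = sQ (st k) by [].
have -> : omII M_ fd A q1 k.+1 = som (st k) by [].
cbv zeta; rewrite -Qp_qII stS (stepII_vector M_sum Qk Qpk) /=.
case: (eqVneq k 0%N) => [->|k0]; first by rewrite !expr0n /= !mul0r; split.
by rewrite omp_omII //= eqSS (negbTE k0); split.
Qed.

Lemma tII_outII k a b c : outII M_ fd A q1 k.+1 = (a, b, c) ->
  [/\ tII M_ fd A q1 k.+1 k.+1 = a, tII M_ fd A q1 k k.+1 = b
    & tII M_ fd A q1 k.+2 k.+1 = c].
Proof.
move=> out; rewrite /tII out eqxx (ltn_eqF (ltnSn k)) (gtn_eqF (ltnSn k.+1)).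
by rewrite (gtn_eqF (leqW (ltnSn k.+1))) !eqxx.
Qed.

Lemma idotT_Bmat_first :
  let q1v : ivec C n := fun j => if j == 0%N then q1 else 0 in
  idotT (imul (Smat M_) (imul (Bmat M_) q1v)) q1v = (q1^T *m M_ 1%N *m q1) 0 0.
Proof.
move=> q1v; have q1v1 : vanish_from q1v 1 by case.
have fBq1v : fsupp (imul (Bmat M_) q1v) := vanish_from_fsupp (Bmat_vanish M_ q1v1).
rewrite (idotTE _ q1v1) big_ord1 imul_Smat0 // (imul_Bmat0 _ q1v1) big_ord1 /q1v /=.
rewrite invr1 scale1r -mulmxA.
transitivity ((q1^T *m (M_ 1%N *m q1))^T 0 0); last by rewrite mxE.
by rewrite [in RHS]trmx_mul trmxK.
Qed.

Hypothesis M0_unit : M_ 0%N \in unitmx.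

Lemma lanczosI_stateII :
  lanczosI (fun x => imul (Smat M_) (imul (Amat M_) x))
    (fun x => imul (Smat M_) (imul (Bmat M_) x)) (fun j => if j == 0%N then q1 else 0)
    qII (fun k => AinvB M_ k (qII k)) (tII M_ fd A q1) (omII M_ fd A q1).
Proof.
split=> //; first by rewrite idotT_Bmat_first.
case=> // k _; have [out qn omn] := stateII_step k; have [t1 t0 tn] := tII_outII out.
have [Qk _] := stateII_vanish k.
cbv zeta; rewrite t1 t0 tn qn omn; split=> //.
  exact: vanish_from_fsupp (AinvB_vanish M_ Qk).
by rewrite Amat_AinvB.
Qed.

End InfiniteLanczosRun.

Section TaylorCoefficients.
Import numFieldNormedType.Exports.

Lemma derive_scalel (K : numFieldType) (W : normedModType K) (g : K -> K) (B : W) x :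
  derivable g x 1 ->
  derivable (fun z => g z *: B) x 1 /\ 'D_1 (fun z => g z *: B) x = 'D_1 g x *: B.
Proof.
move=> dg; have dg' : differentiable g x by apply/derivable1_diffP.
have dG : differentiable (fun z => g z *: B) x by apply: differentiableZl.
by split; [exact: diff_derivable | rewrite deriveE // diffZl // deriveE].
Qed.

Lemma cdern_Mfun (R : realType) n p (r : R) (f : 'I_p -> R[i] -> R[i])
    (A : 'I_p -> 'M[R[i]]_n) :
  (forall m, analytic_on (disk r) (f m)) ->
  forall j z, disk r z -> cdern_mx j (Mfun f A) z = \sum_(m < p) cdern j (f m) z *: A m.
Proof.
move=> an j; elim: j => [|j IH] z hz; first by [].
have disk_nbhs : nbhs (z : CC R) (disk r).
  apply: open_nbhs_nbhs; split=> //.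
  have -> : (disk r : set (CC R)) = ball (0 : CC R) (r%:C)%C.
    by apply: funext => w; rewrite /disk /ball /= sub0r normrN.
  exact: ball_open.
rewrite /cdern_mx derive1nS derive1E.
rewrite (@near_eq_derive _ _ _ _ (fun w : CC R => \sum_(m < p) cdern j (f m) w *: A m));
  last by near=> w; apply: IH; near: w.
rewrite -(fct_sumE _ _ (fun m (w : CC R) => cdern j (f m) w *: A m)).
rewrite derive_sum; last by move=> m; have [] := derive_scalel (A m) (an m j z hz).
apply: eq_bigr => m _; have [_ ->] := derive_scalel (A m) (an m j z hz).
by rewrite /cdern derive1nS derive1E.
Unshelve. all: by end_near.
Qed.

End TaylorCoefficients.

Unset Implicit Arguments.

Theorem theorem5 (R : realType) (n p : nat) (r : R)
  (f : 'I_p -> R[i] -> R[i]) (A : 'I_p -> 'M[R[i]]_n) (q1 : 'cV[R[i]]_n) :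
  0 < r ->
  (forall m, analytic_on (disk r) (f m)) ->
  (forall z, disk r z -> (Mfun f A z)^T = Mfun f A z) ->
  let M_ : nat -> 'M[R[i]]_n := fun j => cdern_mx j (Mfun f A) 0 in
  let fd : 'I_p -> nat -> R[i] := fun m j => cdern j (f m) 0 in
  M_ 0%N \in unitmx ->
  inj_fsupp (Smat M_) ->
  let Ah := fun x : ivec R[i] n => imul (Smat M_) (imul (Amat M_) x) in
  let Bh := fun x : ivec R[i] n => imul (Smat M_) (imul (Bmat M_) x) in
  let q1v : ivec R[i] n := fun j => if j == 0%N then q1 else 0 in
  (exists q w t om, lanczosI Ah Bh q1v q w t om) /\
  (forall q w t om, lanczosI Ah Bh q1v q w t om ->
   forall k, (1 <= k)%N ->
     [/\ forall j, (k <= j)%N -> q k j = 0,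
         \matrix_(a < n, c < k) q k c a 0 = QII M_ fd A q1 k,
         t k k = tII M_ fd A q1 k k,
         t k.-1 k = tII M_ fd A q1 k.-1 k &
         [/\ t k.+1 k = tII M_ fd A q1 k.+1 k & om k = omII M_ fd A q1 k]]).
Proof.
(* The symmetry of [M] makes the pencil symmetric in the paper, but the
   identification of the two algorithms does not need it. *)
move=> r_gt0 an _ M_ fd M0_unit S_inj Ah Bh q1v.
have M_sum j : M_ j = \sum_(m < p) fd m j *: A m.
  by apply: cdern_Mfun => //; rewrite /disk /= normr0 ltcE /= eqxx r_gt0.
have runII := lanczosI_stateII q1 M_sum M0_unit.
split; first by do 4!eexists; exact: runII.
move=> q w t om runI k k_gt0.
have [-> -> -> -> ->] := lanczosI_unique (SA_inj M0_unit S_inj) runI runII k_gt0.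
case: k k_gt0 => // k _; have [Qk _] := stateII_vanish q1 M_sum k.
by split.
Qed.
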